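(* Let $X=[0,1]$ with the usual metric, $U=\{0,1\}$, and let $F_0,F_1:[0,1]\to[0,1]$ be given by $F_0(x)=\frac12$ for $0\le x<\frac14$, $F_0(x)=2(x-\frac12)+1$ for $\frac14\le x<\frac12$, $F_0(x)=1$ for $\frac12\le x\le1$; and $F_1(x)=12(x-\frac14)^2+\frac14$ for $0\le x<\frac14$, $F_1(x)=(x-\frac14)^2+\frac14$ for $\frac14\le x\le1$. Consider the control system $x_{n+1}=F_{u_n}(x_n)$ and let $Q=[0,\frac14]$. Then $Q$ is mean equi-invariant but not finitely equi-invariant in the mean.
   Context: For $\omega=(\omega_0,\omega_1,\dots)\in\mathscr U=U^{\mathbb N_0}$ and $x\in X$: $\phi(0,x,\omega)=x$, $\phi(k,x,\omega)=F_{\omega_{k-1}}\circ\cdots\circ F_{\omega_0}(x)$. $d(y,Q)=\inf_{q\in Q}|y-q|$, $B(x,\delta)$ open ball, $\mathbb N=\{1,2,\dots\}$. A point $x\in Q$ is a mean equi-invariant point of $Q$ if for every $\varepsilon>0$ there exist $\delta>0$ and $\omega\in\mathscr U$ such that $\limsup_{n\to\infty}\frac1n\sum_{i=0}^{n-1}d(\phi(i,y,\omega),Q)<\varepsilon$ for all $y\in B(x,\delta)\cap Q$. It is a finitely equi-invariant point in the mean of $Q$ if for every $\varepsilon>0$ there exist $\delta>0$ and a finite set $F\subset\mathscr U$ such that for every $y\in B(x,\delta)\cap Q$ there is $\omega\in F$ with $\frac1n\sum_{i=0}^{n-1}d(\phi(i,y,\omega),Q)<\varepsilon$ for all $n\in\mathbb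 N$. $Q$ has one of these properties if all its points do. *)

From HB Require Import structures.
From mathcomp Require Import all_boot all_order all_algebra.
From mathcomp Require Import all_classical all_reals all_analysis.
Set Implicit Arguments. Unset Strict Implicit. Unset Printing Implicit Defensive.
Import Order.TTheory GRing.Theory Num.Theory.
Local Open Scope classical_set_scope.
Local Open Scope ring_scope.

Fixpoint phi {X U : Type} (F : U -> X -> X) (k : nat) (x : X) (w : nat -> U) : X :=
  match k with
  | 0%N => x
  | k'.+1 => F (w k') (phi F k' x w)
  end.

Definition dist_set {R : realType} (y : R) (Q : set R) : R :=
  inf [set `|y - q| | q in Q].

Definition mean_dist {R : realType} {U : Type} (F : U -> R -> R) (Q : set R)
  (y : R) (w : nat -> U) (n : nat) : R :=
  n%:R^-1 * \sum_(i < n) dist_set (phi F i y w) Q.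

Definition mean_equi_invariant_point {R : realType} {U : Type}
  (F : U -> R -> R) (Q : set R) (x : R) : Prop :=
  forall eps : R, 0 < eps ->
    exists delta : R, 0 < delta /\ exists w : nat -> U,
      forall y : R, `|y - x| < delta -> Q y ->
        (limn_esup (fun n => (mean_dist F Q y w n)%:E) < eps%:E)%E.

Definition finitely_equi_invariant_mean_point {R : realType} {U : Type}
  (F : U -> R -> R) (Q : set R) (x : R) : Prop :=
  forall eps : R, 0 < eps ->
    exists delta : R, 0 < delta /\ exists Fs : set (nat -> U), finite_set Fs /\
      forall y : R, `|y - x| < delta -> Q y ->
        exists w, Fs w /\ forall n : nat, (0 < n)%N -> mean_dist F Q y w n < eps.

Definition mean_equi_invariant {R : realType} {U : Type}
  (F : U -> R -> R) (Q : set R) : Prop :=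
  forall x, Q x -> mean_equi_invariant_point F Q x.

Definition finitely_equi_invariant_mean {R : realType} {U : Type}
  (F : U -> R -> R) (Q : set R) : Prop :=
  forall x, Q x -> finitely_equi_invariant_mean_point F Q x.

(* The example: U = {0,1} encoded as bool (false = 0, true = 1). *)
Definition F0 {R : realType} (x : R) : R :=
  if x < 4^-1 then 2^-1
  else if x < 2^-1 then 2 * (x - 2^-1) + 1
  else 1.

Definition F1 {R : realType} (x : R) : R :=
  if x < 4^-1 then 12 * (x - 4^-1) ^+ 2 + 4^-1
  else (x - 4^-1) ^+ 2 + 4^-1.

Definition Fex {R : realType} (u : bool) : R -> R := if u then F1 else F0.

Definition Qex {R : realType} : set R := [set x | 0 <= x <= 4^-1].

From HB Require Import structures.
From mathcomp Require Import all_boot all_order all_algebra.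
From mathcomp Require Import all_classical all_reals all_analysis.
From mathcomp Require Import lra.
Set Implicit Arguments. Unset Strict Implicit. Unset Printing Implicit Defensive.
Import Order.TTheory GRing.Theory Num.Theory.
Local Open Scope classical_set_scope.
Local Open Scope ring_scope.

(* Both halves reduce to general criteria valid for any control system on the
   reals and any set Q, proved first:
   - if some fixed control w keeps the cumulative distance
     sum_{i<n} d(phi(i,y,w), Q) of every orbit started in Q below one constant
     C, the averages are <= C/n, so their limsup is 0 and Q is mean
     equi-invariant (with an arbitrary delta);
   - if every control sends some x in Q to distance >= c > 0 from Q, the
     average over the first two steps of the orbit of x itself is >= c/2, so x
     is not a finitely equi-invariant point in the mean.
   For the example, the constant control u = 1 sends Q into [1/4, 1] and then
   squares the excess over 1/4, so that d(phi(i,y,1), Q) <= (3/4)^i and the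
   cumulative distance is at most 4; while both F_0 and F_1 send 0 to a point
   >= 1/2, at distance >= 1/4 from Q. *)

Section DistanceToSet.
Variable R : realType.

Lemma inf_attained (S : set R) m : S m -> (forall s, S s -> m <= s) -> inf S = m.
Proof.
move=> Sm lbm; apply/eqP; rewrite eq_le; apply/andP; split.
  by apply: (ge_inf _ Sm); exists m.
by apply: lb_le_inf; [exists m |].
Qed.

Lemma dist_set_mem (Q : set R) y : Q y -> dist_set y Q = 0.
Proof.
move=> Qy; apply: inf_attained; first by exists y; rewrite ?subrr ?normr0.
by move=> _ [q _ <-].
Qed.

Lemma dist_set_above_max (Q : set R) a y :
  Q a -> (forall q, Q q -> q <= a) -> a <= y -> dist_set y Q = y - a.
Proof.
move=> Qa le_a ay; apply: inf_attained; first by exists a; rewrite ?ger0_norm ?subr_ge0.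
move=> _ [q Qq <-]; have qa := le_a q Qq.
by rewrite ger0_norm ?subr_ge0 ?(le_trans qa) // lerD2l lerN2.
Qed.

End DistanceToSet.

Lemma limn_esup_le_eventually (R : realType) (u : (\bar R)^nat) l N :
  (forall n, (N <= n)%N -> (u n <= l)%E) -> (limn_esup u <= l)%E.
Proof.
move=> ub; rewrite limn_esup_lim; apply: lime_le; first exact: is_cvg_esups.
apply: filterS (nbhs_infty_ge N) => n Nn.
by apply: ge_ereal_sup => _ [k /= nk <-]; apply: ub; apply: leq_trans nk.
Qed.

Section MeanInvarianceCriteria.
Variables (R : realType) (U : Type) (F : U -> R -> R) (Q : set R).

Lemma mean_equi_invariant_of_bounded_total_distance (w : nat -> U) (C : R) :
  (forall y n, Q y -> \sum_(i < n) dist_set (phi F i y w) Q <= C) ->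
  mean_equi_invariant F Q.
Proof.
move=> total x _ eps eps_gt0; exists 1; split => //; exists w => y _ Qy.
pose N := (Num.truncn (2 * C / eps)).+1.
have N_large : 2 * C < eps * N%:R.
  by rewrite -ltr_pdivrMl // mulrC; exact: truncnS_gt.
apply: (@le_lt_trans _ _ (eps / 2)%:E); last by rewrite lte_fin; lra.
apply: (limn_esup_le_eventually (N := N)) => n Nn; rewrite lee_fin.
have n_gt0 : (0 < n)%N by apply: leq_trans Nn.
have avg_le : mean_dist F Q y w n <= n%:R^-1 * C.
  by rewrite /mean_dist ler_wpM2l ?invr_ge0 ?ler0n ?total.
apply: (le_trans avg_le); rewrite mulrC ler_pdivrMr ?ltr0n //.
have : eps * N%:R <= eps * n%:R by rewrite ler_pM2l // ler_nat.
lra.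
Qed.

(* A point of Q that every control sends to distance >= c > 0 from Q is not
   finitely equi-invariant in the mean: the 2-step average of its own orbit
   is already >= c / 2. *)
Lemma not_finitely_equi_invariant_mean_point x (c : R) :
  Q x -> 0 < c -> (forall u, c <= dist_set (F u x) Q) ->
  ~ finitely_equi_invariant_mean_point F Q x.
Proof.
move=> Qx c_gt0 escape fin.
have [d [d_gt0 [W [_ hW]]]] := fin (c / 2) ltac:(lra).
have [w [_ small]] := hW x ltac:(by rewrite subrr normr0) Qx.
have := small 2%N isT.
rewrite /mean_dist !big_ord_recr big_ord0 /= add0r dist_set_mem // add0r.
have := escape (w 0%N); lra.
Qed.

End MeanInvarianceCriteria.

Section Example.
Variable R : realType.
Local Notation Q := (@Qex R).

Lemma Qex_0 : Q 0.
Proof. by rewrite /Qex /= lexx invr_ge0 ler0n. Qed.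

Lemma dist_Qex_above y : 4^-1 <= y -> dist_set y Q = y - 4^-1.
Proof.
apply: dist_set_above_max; first by rewrite /Qex /= lexx andbT.
by move=> q /andP[].
Qed.

(* Whatever the control, 0 is sent to a point >= 1/2, at distance >= 1/4 from Q. *)
Lemma Fex_escape_from_0 u : 4^-1 <= dist_set (Fex u 0) Q.
Proof.
rewrite /Fex; case: u; rewrite /F1 /F0 ifT //.
  by rewrite dist_Qex_above expr2; lra.
by rewrite dist_Qex_above; lra.
Qed.

Definition always1 : nat -> bool := fun _ => true.

Lemma F1_first_step y : Q y -> 0 <= F1 y - 4^-1 <= 3/4.
Proof.
move=> /andP[y_ge0 y_le]; rewrite /F1; case: ifP => [_ | /negbT].
  have prod_ge0 : 0 <= y * (4^-1 - y) by rewrite mulr_ge0 ?subr_ge0.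
  by rewrite addrK mulr_ge0 ?ler0n ?sqr_ge0 //= expr2; lra.
rewrite -leNgt => y_ge; have -> : y = 4^-1 by apply/le_anti/andP.
by rewrite addrK subrr expr2 mulr0; lra.
Qed.

Lemma F1_excess (x : R) : 4^-1 <= x -> F1 x - 4^-1 = (x - 4^-1) ^+ 2.
Proof. by move=> x_ge; rewrite /F1 ltNge x_ge addrK. Qed.

Lemma orbit_excess y i : Q y -> (0 < i)%N ->
  0 <= phi Fex i y always1 - 4^-1 <= (3/4) ^+ i.
Proof.
move=> Qy; elim: i => [// | [_ _ | i IH _]].
  by rewrite expr1; exact: F1_first_step.
have /andP[t_ge0 t_le] := IH isT.
have phi_ge : 4^-1 <= phi Fex i.+1 y always1 by rewrite -subr_ge0.
set t := phi Fex i.+1 y always1 - 4^-1 in t_ge0 t_le.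
have pow_le : (3/4 : R) ^+ i.+1 <= 3/4.
  by rewrite exprS ler_piMr // exprn_ile1 //; lra.
rewrite /= /Fex /always1 F1_excess // -/t sqr_ge0 /= expr2 exprSr.
by rewrite ler_pM // (le_trans t_le).
Qed.

Lemma orbit_dist y i : Q y -> dist_set (phi Fex i y always1) Q <= (3/4) ^+ i.
Proof.
move=> Qy; case: i => [| i]; first by rewrite dist_set_mem.
have /andP[excess_ge0 excess_le] := orbit_excess (i := i.+1) Qy isT.
by rewrite dist_Qex_above // -subr_ge0.
Qed.

Lemma orbit_total_dist y n : Q y ->
  \sum_(i < n) dist_set (phi Fex i y always1) Q <= 4.
Proof.
move=> Qy; apply: (@le_trans _ _ (\sum_(i < n) (3/4 : R) ^+ i)).
  by apply: ler_sum => i _; exact: orbit_dist.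
have geo : series (geometric 1 (3/4 : R)) n <= 1 * (1 - 3/4)^-1.
  by apply: geometric_le_lim => //; rewrite ?ger0_norm; lra.
have inv_quarter : 1 * (1 - 3/4 : R)^-1 = 4.
  by rewrite mul1r -[in RHS](invrK 4); congr (_^-1); lra.
rewrite inv_quarter in geo; apply: le_trans geo; rewrite /series /= big_mkord.
by rewrite (eq_bigr (fun i : 'I_n => 1 * (3/4 : R) ^+ i)) // => i _; rewrite mul1r.
Qed.

End Example.

Theorem mainTheorem16 (R : realType) :
  mean_equi_invariant (@Fex R) (@Qex R) /\
  ~ finitely_equi_invariant_mean (@Fex R) (@Qex R).
Proof.
split.
  exact: (mean_equi_invariant_of_bounded_total_distance (w := always1) (@orbit_total_dist R)).
move=> fin; have := fin 0 (@Qex_0 R).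
apply: (not_finitely_equi_invariant_mean_point (@Qex_0 R) _ (@Fex_escape_from_0 R)).
by rewrite invr_gt0 ltr0n.
Qed.
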